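(* Let $k\ge 2$ and let $\mathcal{S}=\{\mathcal{S}_1,\ldots,\mathcal{S}_{q^k+1}\}$ be a $k$-spread of $\mathbb{F}_q^{2k}$. For each $i$ let $\mathrm{S}_i$ be a full-rank $k\times 2k$ matrix over $\mathbb{F}_q$ with row space $\mathcal{S}_i$. Define the $2k\times 2k$ matrices $\mathrm{W}_i=\begin{pmatrix}\mathrm{S}_i\\ \mathrm{S}_{i+1}\end{pmatrix}$ for $i=1,\ldots,q^k$ and $\mathrm{W}_{q^k+1}=\begin{pmatrix}\mathrm{S}_{q^k+1}\\ \mathrm{S}_1\end{pmatrix}$, and for $1\le j\le 2k-1$ let $\mathcal{W}_i^{(j)}$ be the row space of the first $j$ rows of $\mathrm{W}_i$. Then for every $1\le j\le 2k-1$ the set $\mathcal{C}_j=\{\mathcal{W}_i^{(j)} : i=1,\ldots,q^k+1\}$ is a set of $j$-dimensional subspaces of $\mathbb{F}_q^{2k}$ with $|\mathcal{C}_j|=|\mathcal{S}|$. Moreover: (1) for $1\le j\le k$, $\mathcal{C}_j$ is a partial spread, i.e. distinct elements intersect trivially; (2) for $k<j\le 2k-1$, any two distinct elements of $\mathcal{C}_j$ intersect in a subspace of dimension exactly $2(j-k)$, so that the subspace distance between any two distinct elements of $\mathcal{C}_j$ is $2(2k-j)$, the maximum possible distance between two $j$-dimensional subspaces of $\mathbb{F}_q^{2k}$.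
   Context: $q$ is a prime power. A $k$-spread of $\mathbb{F}_q^{2k}$ (planar spread) is a set of $k$-dimensional subspaces of $\mathbb{F}_q^{2k}$ pairwise intersecting trivially with cardinality $q^k+1$; any two distinct members then sum to $\mathbb{F}_q^{2k}$. The subspace distance is $d_S(\mathcal{U},\mathcal{V})=\dim(\mathcal{U}+\mathcal{V})-\dim(\mathcal{U}\cap\mathcal{V})$. *)

From HB Require Import structures.
From mathcomp Require Import all_boot all_order all_algebra all_field.
Set Implicit Arguments. Unset Strict Implicit. Unset Printing Implicit Defensive.
Import GRing.Theory.
Local Open Scope ring_scope.

(* Subspaces of F^n are represented (mxalgebra style) by matrices via their
   row spaces: \rank A = dimension, (A :&: B)%MS = intersection, (A + B)%MS = sum. *)

Definition subspace_dist (F : fieldType) (m1 m2 n : nat)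
  (U : 'M[F]_(m1, n)) (V : 'M[F]_(m2, n)) : nat :=
  (\rank (U + V)%MS - \rank (U :&: V)%MS)%N.

(* The matrix made of the first j rows of A (meaningful for j <= m). *)
Definition firstrows (F : fieldType) (m n : nat) (j : nat) (A : 'M[F]_(m, n))
  : 'M[F]_(j, n) :=
  \matrix_(r < j, c < n) \sum_(i < m | (i : nat) == (r : nat)) A i c.

Definition is_spread_mx (F : finFieldType) (k : nat)
  (S : 'I_((#|F| ^ k).+1) -> 'M[F]_(k, 2 * k)) : Prop :=
  (forall i, \rank (S i) = k) /\
  (forall i i', i != i' -> \rank (S i :&: S i')%MS = 0%N).

Definition Wmx (F : finFieldType) (k : nat)
  (S : 'I_((#|F| ^ k).+1) -> 'M[F]_(k, 2 * k)) (i : 'I_((#|F| ^ k).+1))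
  : 'M[F]_(k + k, 2 * k) :=
  col_mx (S i) (S (ordS i)).

Definition Wj (F : finFieldType) (k : nat)
  (S : 'I_((#|F| ^ k).+1) -> 'M[F]_(k, 2 * k)) (j : nat) (i : 'I_((#|F| ^ k).+1))
  : 'M[F]_(j, 2 * k) :=
  firstrows j (Wmx S i).

From HB Require Import structures.
From mathcomp Require Import all_boot all_order all_algebra all_field.
From mathcomp Require Import zify.

Set Implicit Arguments.
Unset Strict Implicit.
Unset Printing Implicit Defensive.

Import GRing.Theory.
Local Open Scope ring_scope.

(* Consecutive members S_i, S_(i+1) of a spread are complementary, so each W_i
   is invertible and its first j rows span a j-space.  For j <= k these lie in
   S_i, and distinct S_i meet trivially; for j >= k they contain S_i, so two of
   them span everything and meet in dimension j + j - 2k.  Either way two of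
   them meet in dimension < j, so distinct indices give distinct subspaces. *)

Section FirstRows.

Variable F : fieldType.

Lemma firstrowsE m n j (A : 'M[F]_(m, n)) : firstrows j A = pid_mx j *m A.
Proof.
apply/matrixP => r c; rewrite !mxE big_mkcond /=.
apply: eq_bigr => i _; rewrite mxE ltn_ord andbT eq_sym.
by case: eqP => _; rewrite ?mul1r ?mul0r.
Qed.

Lemma firstrows_sub m n j (A : 'M[F]_(m, n)) : (firstrows j A <= A)%MS.
Proof. by rewrite firstrowsE submxMl. Qed.

Lemma rank_firstrows m n j (A : 'M[F]_(m, n)) :
  row_free A -> (j <= m)%N -> \rank (firstrows j A) = j.
Proof. by move=> freeA le_jm; rewrite firstrowsE mxrankMfree // rank_pid_mx. Qed.

Lemma firstrows_id m n (A : 'M[F]_(m, n)) : firstrows m A = A.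
Proof. by rewrite firstrowsE pid_mx_1 mul1mx. Qed.

Lemma firstrows_firstrows m n i j (A : 'M[F]_(m, n)) :
  (i <= j)%N -> firstrows i (firstrows j A) = firstrows i A.
Proof.
move=> le_ij; rewrite !firstrowsE mulmxA mul_pid_mx (minn_idPl le_ij).
by rewrite minnC (minn_idPl le_ij).
Qed.

Lemma firstrows_col_mx k l n j (X : 'M[F]_(k, n)) (Y : 'M[F]_(l, n)) :
  (j <= k)%N -> firstrows j (col_mx X Y) = firstrows j X.
Proof.
move=> le_jk; apply/matrixP => r c; rewrite !mxE.
by rewrite (big_pred1 (lshift l (widen_ord le_jk r))) // col_mxEu
  (big_pred1 (widen_ord le_jk r)).
Qed.

Lemma firstrows_col_mx_subl k l n j (X : 'M[F]_(k, n)) (Y : 'M[F]_(l, n)) :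
  (j <= k)%N -> (firstrows j (col_mx X Y) <= X)%MS.
Proof. by move=> le_jk; rewrite firstrows_col_mx // firstrows_sub. Qed.

Lemma subl_firstrows_col_mx k l n j (X : 'M[F]_(k, n)) (Y : 'M[F]_(l, n)) :
  (k <= j)%N -> (X <= firstrows j (col_mx X Y))%MS.
Proof.
move=> le_kj; rewrite -{1}[X]firstrows_id -(firstrows_col_mx X Y (leqnn k)).
by rewrite -(firstrows_firstrows _ le_kj) firstrows_sub.
Qed.

End FirstRows.

Lemma subspace_distE (F : fieldType) m1 m2 n
    (U : 'M[F]_(m1, n)) (V : 'M[F]_(m2, n)) :
  subspace_dist U V = (2 * \rank (U + V)%MS - \rank U - \rank V)%N.
Proof. by rewrite /subspace_dist; have := mxrank_sum_cap U V; lia. Qed.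

Lemma subspace_dist_max (F : fieldType) m1 m2 n j
    (U : 'M[F]_(m1, n)) (V : 'M[F]_(m2, n)) :
  \rank U = j -> \rank V = j -> (subspace_dist U V <= 2 * (n - j))%N.
Proof.
rewrite subspace_distE => rU rV; have := rank_leq_col (U + V)%MS; lia.
Qed.

Lemma ordS_neq n (i : 'I_n) : (1 < n)%N -> ordS i != i.
Proof.
move=> lt1n; rewrite -val_eqE /=.
have [lt_i1n | le_ni1] := ltnP i.+1 n; first by rewrite modn_small // gtn_eqF.
have -> : i.+1 = n by have := ltn_ord i; lia.
by rewrite modnn; lia.
Qed.

Section Spread.

Variables (F : finFieldType) (k : nat).
Variable S : 'I_((#|F| ^ k).+1) -> 'M[F]_(k, 2 * k).
Hypothesis spreadS : is_spread_mx S.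

Lemma spread_adds_full i i' : i != i' -> \rank (S i + S i')%MS = (2 * k)%N.
Proof.
case: spreadS => rankS capS ne_ii'.
by have := mxrank_sum_cap (S i) (S i'); rewrite capS // !rankS; lia.
Qed.

Lemma row_free_Wmx i : row_free (Wmx S i).
Proof.
have ne_iS : i != ordS i.
  by rewrite eq_sym ordS_neq // ltnS expn_gt0 (cardD1 0).
by rewrite /row_free /Wmx -addsmxE spread_adds_full //; lia.
Qed.

Lemma rank_Wj j i : (j <= 2 * k)%N -> \rank (Wj S j i) = j.
Proof. by move=> le_j2k; rewrite rank_firstrows ?row_free_Wmx //; lia. Qed.

Lemma rank_adds_Wj j i i' : (k <= j)%N -> i != i' ->
  \rank (Wj S j i + Wj S j i')%MS = (2 * k)%N.
Proof.
move=> le_kj ne_ii'; apply/eqP; rewrite eqn_leq rank_leq_col.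
rewrite -{1}(spread_adds_full ne_ii').
by apply/mxrankS/addsmxS; apply: subl_firstrows_col_mx.
Qed.

(* For j <= k the truncated subtraction makes the right-hand side 0. *)
Lemma rank_cap_Wj j i i' : (j <= 2 * k)%N -> i != i' ->
  \rank (Wj S j i :&: Wj S j i')%MS = (2 * (j - k))%N.
Proof.
move=> le_j2k ne_ii'; have [le_jk | lt_kj] := leqP j k.
  have [_ capS] := spreadS.
  have /eqP-> : (j - k == 0)%N by rewrite subn_eq0.
  apply/eqP; rewrite -leqn0 -[leqRHS](capS _ _ ne_ii').
  by apply/mxrankS/capmxS; apply: firstrows_col_mx_subl.
have := mxrank_sum_cap (Wj S j i) (Wj S j i').
by rewrite rank_adds_Wj ?(ltnW lt_kj) // !rank_Wj //; lia.
Qed.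

End Spread.

Theorem proposition4p3 (F : finFieldType) (k : nat) (hk : (2 <= k)%N)
  (S : 'I_((#|F| ^ k).+1) -> 'M[F]_(k, 2 * k))
  (hS : is_spread_mx S) :
  forall j : nat, (1 <= j <= 2 * k - 1)%N ->
    (* each W_i^{(j)} is j-dimensional *)
    (forall i, \rank (Wj S j i) = j) /\
    (* |C_j| = |S| *)
    #|[set <<Wj S j i>>%MS | i : 'I_((#|F| ^ k).+1)]| = (#|F| ^ k).+1 /\
    (* (1) partial spread *)
    ((j <= k)%N -> forall i i', i != i' ->
       \rank (Wj S j i :&: Wj S j i')%MS = 0%N) /\
    (* (2) intersections of dimension 2(j-k), distance 2(2k-j), which is maximal *)
    ((k < j)%N ->
       (forall i i', i != i' ->
          \rank (Wj S j i :&: Wj S j i')%MS = (2 * (j - k))%N /\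
          subspace_dist (Wj S j i) (Wj S j i') = (2 * (2 * k - j))%N) /\
       (forall U V : 'M[F]_(j, 2 * k), \rank U = j -> \rank V = j ->
          (subspace_dist U V <= 2 * (2 * k - j))%N)).
Proof.
move=> j /andP[ge_j1 le_j2k]; have {le_j2k}lt_j2k : (j < 2 * k)%N by lia.
have le_j2k := ltnW lt_j2k.
have rankW := rank_Wj hS _ le_j2k; have rank_cap := rank_cap_Wj hS le_j2k.
split=> //; split.
  rewrite card_imset ?card_ord // => i i' /genmxP/andP[sub_ii' _].
  apply/eqP/negP => /negP/rank_cap; rewrite (capmx_idPl sub_ii').
  by rewrite rankW; lia.
split=> [le_jk i i' /rank_cap -> | lt_kj]; first by lia.
split=> [i i' ne_ii' | U V]; last exact: subspace_dist_max.
split; first exact: rank_cap.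
by rewrite subspace_distE rank_adds_Wj ?(ltnW lt_kj) // !rankW; lia.
Qed.
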